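(* Let $(X,<)$ be a linearly ordered set. (1) For all $u,v\in\beta X$: $$u\trianglelefteq v\iff \widetilde{\min}(u,v)=u\vee\widetilde{\min}(v,u)=u\iff\widetilde{\min}(u,v)=u\vee\widetilde{\min}(u,v)\ne\widetilde{\min}(v,u)$$ $$\iff\widetilde{\max}(u,v)=v\vee\widetilde{\max}(v,u)=v\iff\widetilde{\max}(u,v)=v\vee\widetilde{\max}(u,v)\ne\widetilde{\max}(v,u),$$ and $$u\equiv v\iff\widetilde{\min}(u,v)\ne\widetilde{\min}(v,u)\vee u=v\iff\widetilde{\max}(u,v)\ne\widetilde{\max}(v,u)\vee u=v.$$ (2) The equivalence $\equiv$ is a congruence of the skew lattice $(\beta X,\widetilde{\max},\widetilde{\min})$ and coincides with the relation $D$. (3) The quotient $\beta X/\!\equiv$ with the operations induced by $\widetilde{\min}$ and $\widetilde{\max}$ is isomorphic, via $[u]\mapsto\mathrm{supp}(u)$, to the lattice $(s(X),\min,\max)$. (4) For each $u\in\beta X$, the $\equiv$-class of $u$ is $\{u\}$ if $u$ is principal; if $u$ is non-principal with $I_u\in u$, it is a left-zero band for $\widetilde{\min}$ and a right-zero band for $\widetilde{\max}$; if $u$ is non-principal with $J_u\in u$, it is a right-zero band for $\widetilde{\min}$ and a left-zero band for $\widetilde{\max}$.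
   Context: $\beta X$ is the set of ultrafilters over $X$. For a binary relation $R$ on $X$, $u\,\tilde R\,v\iff\{x:\{y:x\,R\,y\}\in v\}\in u$; for a binary operation $F$ (here $\min,\max$), $S\in\tilde F(u,v)\iff\{x:\{y:F(x,y)\in S\}\in v\}\in u$. Define $u\trianglelefteq v\iff(u\,\tilde\le\,v\vee v\,\tilde\ge\,u)$ and $u\equiv v\iff(u\trianglelefteq v\wedge v\trianglelefteq u)$. $D$ is the relation on $\beta X$ given by $u\,D\,v\iff\widetilde{\min}(\widetilde{\min}(u,v),u)=u\wedge\widetilde{\min}(\widetilde{\min}(v,u),v)=v$. A set $B$ with binary operation $\cdot$ is a left-zero band if $xy=x$ for all $x,y\in B$, a right-zero band if $xy=y$ for all $x,y\in B$. $I_u=\bigcap\{I\in u:I\text{ initial segment}\}$, $J_u=\bigcap\{J\in u:J\text{ final segment}\}$. Supports: $\mathrm{supp}(\tilde x)=\{x\}$; for non-principal $u$ (exactly one of $I_u\in u$, $J_u\in u$ holds), $\mathrm{supp}(u)$ is $I_u$ regarded as a left half-cut if $I_u\in u$ and $J_u$ regarded as a right half-cut if $J_u\in u$; supports equal iff same kind and equal as sets. $s(X)$ is the set of all supports of ultrafilters over $X$, linearly ordered by: $\{x\}<\{y\}$ iff $x<y$; $\{x\}<I$ iff $x\in I$, $I<\{x\}$ iff $x\notin I$; $\{x\}<J$ iff $x\notin J$, $J<\{x\}$ iff $x\in J$; $I<I'$ iff $I\subsetneq I'$; $J<J'$ iff $J\supsetneq J'$; $I<J$ iff $I\cap J=\emptyset$,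 $J<I$ iff $I\cap J\neq\emptyset$; $\min,\max$ on $s(X)$ are taken with respect to this order. *)

From Stdlib Require Import Classical ClassicalEpsilon FunctionalExtensionality PropExtensionality.

Definition strict_linear_order (X : Type) (lt : X -> X -> Prop) : Prop :=
  (forall x, ~ lt x x) /\
  (forall x y z, lt x y -> lt y z -> lt x z) /\
  (forall x y, lt x y \/ x = y \/ lt y x).

Definition le {X : Type} (lt : X -> X -> Prop) (x y : X) : Prop := lt x y \/ x = y.

Record ultra (X : Type) := Ultra {
  umem : (X -> Prop) -> Prop;
  u_full : umem (fun _ => True);
  u_nempty : ~ umem (fun _ => False);
  u_inter : forall A B, umem A -> umem B -> umem (fun x => A x /\ B x);
  u_up : forall A B : X -> Prop, (forall x, A x -> B x) -> umem A -> umem B;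
  u_ult : forall A, umem A \/ umem (fun x => ~ A x) }.

Arguments umem {X} u A.
Arguments u_full {X} u.
Arguments u_nempty {X} u.
Arguments u_inter {X} u A B.
Arguments u_up {X} u A B.
Arguments u_ult {X} u A.

Definition principal_uf {X : Type} (x : X) : ultra X.
Proof.
  refine (@Ultra X (fun A => A x) _ _ _ _ _).
  - exact I.
  - exact (fun H => H).
  - exact (fun A B a b => conj a b).
  - exact (fun A B H a => H x a).
  - exact (fun A => classic (A x)).
Defined.

Definition is_principal {X : Type} (u : ultra X) : Prop :=
  exists x : X, u = principal_uf x.

Definition ext_op {X : Type} (F : X -> X -> X) (u v : ultra X) : ultra X.
Proof.
  refine (@Ultra X (fun S => umem u (fun x => umem v (fun y => S (F x y)))) _ _ _ _ _).
  - apply (u_up u (fun _ => True)); [intros x _; apply (u_full v) | apply (u_full u)].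
  - intro H. apply (u_nempty u).
    apply (u_up u (fun x => umem v (fun y => False)) (fun _ => False));
      [intros x Hx; exact (u_nempty v Hx) | exact H].
  - intros A B HA HB.
    apply (u_up u (fun x => umem v (fun y => A (F x y)) /\ umem v (fun y => B (F x y)))).
    + intros x [a b]. exact (u_inter v _ _ a b).
    + apply (u_inter u); assumption.
  - intros A B H HA.
    apply (u_up u (fun x => umem v (fun y => A (F x y)))); [|exact HA].
    intros x Hx. exact (u_up v _ _ (fun y => H (F x y)) Hx).
  - intros A.
    destruct (u_ult u (fun x => umem v (fun y => A (F x y)))) as [H|H];
      [left; exact H | right].
    apply (u_up u _ _) with (2 := H). intros x Hx.
    destruct (u_ult v (fun y => A (F x y))) as [H'|H']; [contradiction | exact H'].
Defined.

Definition ext_rel {X : Type} (R : X -> X -> Prop) (u v : ultra X) : Prop :=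
  umem u (fun x => umem v (fun y => R x y)).

Definition xmin {X : Type} (lt : X -> X -> Prop) (x y : X) : X :=
  if excluded_middle_informative (le lt x y) then x else y.
Definition xmax {X : Type} (lt : X -> X -> Prop) (x y : X) : X :=
  if excluded_middle_informative (le lt x y) then y else x.

Definition tmin {X : Type} (lt : X -> X -> Prop) (u v : ultra X) : ultra X :=
  ext_op (xmin lt) u v.
Definition tmax {X : Type} (lt : X -> X -> Prop) (u v : ultra X) : ultra X :=
  ext_op (xmax lt) u v.

Definition tle {X : Type} (lt : X -> X -> Prop) (u v : ultra X) : Prop :=
  ext_rel (le lt) u v \/ ext_rel (fun x y => le lt y x) v u.

Definition tequiv {X : Type} (lt : X -> X -> Prop) (u v : ultra X) : Prop :=
  tle lt u v /\ tle lt v u.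

Definition relD {X : Type} (lt : X -> X -> Prop) (u v : ultra X) : Prop :=
  tmin lt (tmin lt u v) u = u /\ tmin lt (tmin lt v u) v = v.

Definition initial_seg {X : Type} (lt : X -> X -> Prop) (I : X -> Prop) : Prop :=
  forall x y, I y -> le lt x y -> I x.
Definition final_seg {X : Type} (lt : X -> X -> Prop) (J : X -> Prop) : Prop :=
  forall x y, J y -> le lt y x -> J x.

Definition Iu {X : Type} (lt : X -> X -> Prop) (u : ultra X) : X -> Prop :=
  fun x => forall I, initial_seg lt I -> umem u I -> I x.
Definition Ju {X : Type} (lt : X -> X -> Prop) (u : ultra X) : X -> Prop :=
  fun x => forall J, final_seg lt J -> umem u J -> J x.

(* supports: a point {x}, a left half-cut I, or a right half-cut J;
   two supports are equal iff same kind and equal (as sets) *)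
Inductive supp_t (X : Type) :=
  | SPt (x : X)
  | SLeft (I : X -> Prop)
  | SRight (J : X -> Prop).
Arguments SPt {X} x.
Arguments SLeft {X} I.
Arguments SRight {X} J.

Definition supp {X : Type} (lt : X -> X -> Prop) (u : ultra X) : supp_t X :=
  match excluded_middle_informative (is_principal u) with
  | left H => SPt (proj1_sig (constructive_indefinite_description _ H))
  | right _ =>
      if excluded_middle_informative (umem u (Iu lt u))
      then SLeft (Iu lt u) else SRight (Ju lt u)
  end.

Definition in_sX {X : Type} (lt : X -> X -> Prop) (s : supp_t X) : Prop :=
  exists u : ultra X, supp lt u = s.

Definition supp_lt {X : Type} (lt : X -> X -> Prop) (s t : supp_t X) : Prop :=
  match s, t with
  | SPt x, SPt y => lt x y
  | SPt x, SLeft K => K x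
  | SLeft K, SPt x => ~ K x
  | SPt x, SRight L => ~ L x
  | SRight L, SPt x => L x
  | SLeft K, SLeft K' => (forall x, K x -> K' x) /\ exists x, K' x /\ ~ K x
  | SRight L, SRight L' => (forall x, L' x -> L x) /\ exists x, L x /\ ~ L' x
  | SLeft K, SRight L => forall x, ~ (K x /\ L x)
  | SRight L, SLeft K => exists x, K x /\ L x
  end.

Definition smin {X : Type} (lt : X -> X -> Prop) (s t : supp_t X) : supp_t X :=
  if excluded_middle_informative (supp_lt lt s t) then s else t.
Definition smax {X : Type} (lt : X -> X -> Prop) (s t : supp_t X) : supp_t X :=
  if excluded_middle_informative (supp_lt lt s t) then t else s.

From Stdlib Require Import Classical ClassicalEpsilon FunctionalExtensionality PropExtensionality ProofIrrelevance.

(* Everything is driven by the initial segments of X.  Write [below u v] when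
   every initial segment belonging to v also belongs to u.  We show:
   - u ⊴ v holds iff [below u v]; hence ≡ is mutual [below], an equivalence;
   - an initial segment lies in min~(u,v) iff it lies in u or in v, and in
     max~(u,v) iff it lies in both; this gives compatibility with min~, max~;
   - if an initial segment I separates u from v (I ∈ u, I ∉ v), then
     min~(u,v) = min~(v,u) = u and max~(u,v) = max~(v,u) = v;
   - inside one ≡-class: a principal ultrafilter is alone; a non-principal
     class with I_u ∈ u is left-zero for min~ and right-zero for max~, one
     with J_u ∈ u is the reverse (using that I_u, J_u have no endpoint in u).
   Combining separation with the band structure of a class yields all the
   characterisations of (1) and the relation D of (2).  For (3), membership
   of an initial segment in u is read off supp(u) alone, and the order of
   s(X) is exactly separation by initial segments; so supp is constant
   exactly on ≡-classes and turns min~, max~ into min, max. *)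

Section Ultrafilters.
Context {X : Type}.

Lemma uf_ext (u v : ultra X) : (forall A, umem u A <-> umem v A) -> u = v.
Proof.
  destruct u as [m1 a1 b1 c1 d1 e1], v as [m2 a2 b2 c2 d2 e2]; simpl; intro H.
  assert (Em : m1 = m2).
  { apply functional_extensionality; intro A; apply propositional_extensionality; apply H. }
  subst m2. f_equal; apply proof_irrelevance.
Qed.

Lemma uf_nonempty (u : ultra X) A : umem u A -> exists x, A x.
Proof.
  intro H. apply NNPP; intro N. apply (u_nempty u).
  apply (u_up u A); [|exact H]. intros x Hx; apply N; exists x; exact Hx.
Qed.

Lemma uf_meet (u : ultra X) A B : umem u A -> umem u B -> exists x, A x /\ B x.
Proof. intros; apply (uf_nonempty u); apply u_inter; auto. Qed.

Lemma uf_compl (u : ultra X) A : ~ umem u A -> umem u (fun x => ~ A x).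
Proof. intro H; destruct (u_ult u A); tauto. Qed.

Lemma uf_compl_iff (u : ultra X) A : umem u A <-> ~ umem u (fun x => ~ A x).
Proof.
  split; [|intro H; destruct (u_ult u A); tauto].
  intros H1 H2. destruct (uf_meet u _ _ H1 H2) as [x [a b]]; tauto.
Qed.

Lemma uf_principal_of_gap (u : ultra X) A B x :
  umem u A -> ~ umem u B -> (forall y, A y -> ~ B y -> y = x) -> u = principal_uf x.
Proof.
  intros HA HB Hgap. apply uf_ext; intro C; simpl.
  assert (Hx : umem u (fun y => y = x)).
  { apply (u_up u (fun y => A y /\ ~ B y)); [intros y [a b]; auto|].
    apply u_inter; auto. apply uf_compl; auto. }
  split.
  - intro H. destruct (uf_meet u _ _ Hx H) as [y [E Cy]]; subst; auto.
  - intro H. apply (u_up u _ _) with (2 := Hx). intros; subst; auto.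
Qed.

Lemma ext_op_left F (u v : ultra X) A B : umem u A -> (forall x, A x -> umem v (B x)) ->
  (forall x y, A x -> B x y -> F x y = x) -> ext_op F u v = u.
Proof.
  intros HA HB HF. apply uf_ext; intro S; simpl. split.
  - intro H. apply (u_up u (fun x => A x /\ umem v (fun y => S (F x y)))).
    + intros x [Ax Hx]. destruct (uf_meet v _ _ Hx (HB x Ax)) as [y [Sy By]].
      rewrite (HF x y Ax By) in Sy; exact Sy.
    + apply u_inter; auto.
  - intro H. apply (u_up u (fun x => A x /\ S x)).
    + intros x [Ax Sx]. apply (u_up v (B x)); [intros y By; rewrite (HF x y Ax By)|]; auto.
    + apply u_inter; auto.
Qed.

Lemma ext_op_right F (u v : ultra X) A B : umem u A -> (forall x, A x -> umem v (B x)) ->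
  (forall x y, A x -> B x y -> F x y = y) -> ext_op F u v = v.
Proof.
  intros HA HB HF. apply uf_ext; intro S; simpl. split.
  - intro H. destruct (uf_meet u _ _ H HA) as [x [Hx Ax]].
    apply (u_up v (fun y => S (F x y) /\ B x y)).
    + intros y [Sy By]; rewrite (HF x y Ax By) in Sy; auto.
    + apply u_inter; auto.
  - intro H. apply (u_up u A); [|auto]. intros x Ax.
    apply (u_up v (fun y => S y /\ B x y)).
    + intros y [Sy By]; rewrite (HF x y Ax By); auto.
    + apply u_inter; auto.
Qed.

End Ultrafilters.

Section LinearOrder.
Context {X : Type} {lt : X -> X -> Prop} (Hl : strict_linear_order X lt).

Lemma lt_irrefl x : ~ lt x x.
Proof. destruct Hl as [H _]; apply H. Qed.

Lemma lt_trans x y z : lt x y -> lt y z -> lt x z.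
Proof. destruct Hl as [_ [H _]]; apply H. Qed.

Lemma le_refl x : le lt x x.
Proof. right; auto. Qed.

Lemma le_not_lt x y : le lt x y -> ~ lt y x.
Proof.
  intros [H|H] H2; [apply (lt_irrefl x); eapply lt_trans; eauto|subst; eapply lt_irrefl; eauto].
Qed.

Lemma not_le_lt x y : ~ le lt x y -> lt y x.
Proof.
  intro H. destruct Hl as [_ [_ Htot]].
  destruct (Htot x y) as [a|[a|a]]; auto; exfalso; apply H; [left|right]; auto.
Qed.

Lemma initial_seg_lt I x y : initial_seg lt I -> I y -> ~ I x -> lt y x.
Proof. intros HI Hy Hx. apply not_le_lt. intro H. apply Hx. apply (HI x y); auto. Qed.

Lemma initial_le x : initial_seg lt (fun y => le lt y x).
Proof.
  intros a b Hb [H|H]; [left|subst; auto].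
  destruct Hb as [H2|H2]; [eapply lt_trans; eauto|subst; auto].
Qed.

Lemma initial_lt x : initial_seg lt (fun y => lt y x).
Proof. intros a b Hb [H|H]; [eapply lt_trans; eauto|subst; auto]. Qed.

Lemma final_lt x : final_seg lt (fun y => lt x y).
Proof. intros a b Hb [H|H]; [eapply lt_trans; eauto|subst; auto]. Qed.

Lemma final_compl_initial J : final_seg lt J -> initial_seg lt (fun x => ~ J x).
Proof. intros HJ a b Hb Hab Ja. apply Hb. eapply HJ; eauto. Qed.

Lemma initial_compl_final I : initial_seg lt I -> final_seg lt (fun x => ~ I x).
Proof. intros HI a b Hb Hab Ia. apply Hb. eapply HI; eauto. Qed.

Lemma Iu_initial u : initial_seg lt (Iu lt u).
Proof. intros a b Hb Hab I HI Hu. apply (HI a b); [apply Hb; auto|exact Hab]. Qed.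

Lemma Ju_final u : final_seg lt (Ju lt u).
Proof. intros a b Hb Hab J HJ Hu. apply (HJ a b); [apply Hb; auto|exact Hab]. Qed.

Lemma xmin_l x y : le lt x y -> xmin lt x y = x.
Proof. unfold xmin; destruct (excluded_middle_informative _); auto; contradiction. Qed.

Lemma xmin_r x y : lt y x -> xmin lt x y = y.
Proof.
  intro H; unfold xmin; destruct (excluded_middle_informative _); auto.
  exfalso; eapply le_not_lt; eauto.
Qed.

Lemma xmax_r x y : le lt x y -> xmax lt x y = y.
Proof. unfold xmax; destruct (excluded_middle_informative _); auto; contradiction. Qed.

Lemma xmax_l x y : lt y x -> xmax lt x y = x.
Proof.
  intro H; unfold xmax; destruct (excluded_middle_informative _); auto.
  exfalso; eapply le_not_lt; eauto.
Qed.

Lemma xmin_lower x y : le lt (xmin lt x y) x /\ le lt (xmin lt x y) y.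
Proof.
  destruct (classic (le lt x y)) as [H|H].
  - rewrite xmin_l; auto using le_refl.
  - rewrite xmin_r by (apply not_le_lt; auto). split; [left; apply not_le_lt|]; auto using le_refl.
Qed.

Lemma xmax_upper x y : le lt x (xmax lt x y) /\ le lt y (xmax lt x y).
Proof.
  destruct (classic (le lt x y)) as [H|H].
  - rewrite xmax_r; auto using le_refl.
  - rewrite xmax_l by (apply not_le_lt; auto). split; [|left; apply not_le_lt]; auto using le_refl.
Qed.

Lemma xmin_cases x y : xmin lt x y = x \/ xmin lt x y = y.
Proof. unfold xmin; destruct (excluded_middle_informative _); auto. Qed.

Lemma xmax_cases x y : xmax lt x y = x \/ xmax lt x y = y.
Proof. unfold xmax; destruct (excluded_middle_informative _); auto. Qed.

Lemma tmin_initial (u v : ultra X) I : initial_seg lt I ->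
  (umem (tmin lt u v) I <-> umem u I \/ umem v I).
Proof.
  intro HI; unfold tmin; simpl; split.
  - intro H; apply NNPP; intro N; apply not_or_and in N; destruct N as [N1 N2].
    destruct (uf_meet u _ _ H (uf_compl _ _ N1)) as [x [Hx Nx]].
    destruct (uf_meet v _ _ Hx (uf_compl _ _ N2)) as [y [Hy Ny]].
    destruct (xmin_cases x y) as [E|E]; rewrite E in Hy; tauto.
  - intros [Hu|Hv].
    + apply (u_up u I); [|exact Hu]. intros x Hx.
      apply (u_up v (fun _ => True)); [|apply u_full]. intros y _.
      apply (HI _ x Hx); apply xmin_lower.
    + apply (u_up u (fun _ => True)); [|apply u_full]. intros x _.
      apply (u_up v I); [|exact Hv]. intros y Hy.
      apply (HI _ y Hy); apply xmin_lower.
Qed.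

Lemma tmax_initial (u v : ultra X) I : initial_seg lt I ->
  (umem (tmax lt u v) I <-> umem u I /\ umem v I).
Proof.
  intro HI; unfold tmax; simpl; split.
  - intro H; split.
    + apply (u_up u _ _) with (2 := H). intros x Hx.
      destruct (uf_nonempty _ _ Hx) as [y Hy]. apply (HI _ _ Hy); apply xmax_upper.
    + destruct (uf_nonempty _ _ H) as [x Hx]. apply (u_up v _ _) with (2 := Hx).
      intros y Hy. apply (HI _ _ Hy); apply xmax_upper.
  - intros [Hu Hv]. apply (u_up u I); [|exact Hu]. intros x Hx.
    apply (u_up v I); [|exact Hv]. intros y Hy.
    destruct (xmax_cases x y) as [E|E]; rewrite E; auto.
Qed.

Definition below (u v : ultra X) : Prop :=
  forall I, initial_seg lt I -> umem v I -> umem u I.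

Lemma below_refl u : below u u.
Proof. intros I _ H; auto. Qed.

Lemma below_trans u v w : below u v -> below v w -> below u w.
Proof. intros A B I HI H; apply A; auto. Qed.

Lemma not_below u v : ~ below u v -> exists I, initial_seg lt I /\ umem v I /\ ~ umem u I.
Proof.
  unfold below; intro N; apply NNPP; intro M; apply N; intros I HI Hv.
  apply NNPP; intro Hu; apply M; eauto.
Qed.

Lemma tle_below u v : tle lt u v <-> below u v.
Proof.
  unfold tle, ext_rel; split.
  - intros [H1|H2] I HI Hv.
    + apply NNPP; intro N.
      destruct (uf_meet u _ _ H1 (uf_compl _ _ N)) as [x [Hx Nx]].
      destruct (uf_meet v _ _ Hx Hv) as [y [Hxy Hy]].
      apply Nx; eapply HI; eauto.
    + destruct (uf_meet v _ _ H2 Hv) as [y [Hy Iy]].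
      apply (u_up u _ _) with (2 := Hy). intros z Hz; eapply HI; eauto.
  - intro L. apply NNPP; intro N. apply not_or_and in N; destruct N as [N1 N2].
    pose proof (uf_compl _ _ N1) as C. pose proof (uf_compl _ _ N2) as D.
    (* the points y with (-oo, y] not in u form an initial segment lying in v *)
    assert (DI : initial_seg lt (fun y => ~ umem u (fun x => le lt x y))).
    { intros a b Hb Hab Ha. apply Hb. apply (u_up u _ _) with (2 := Ha).
      intros z Hz. destruct Hab as [Hab|Hab]; [|subst; auto].
      destruct Hz as [Hz|Hz]; left; [eapply lt_trans; eauto|subst; auto]. }
    destruct (uf_meet u _ _ C (L _ DI D)) as [x [Cx Dx]].
    apply Dx. apply (u_up u (fun y => lt y x)); [intros; left; auto|].
    apply L; [apply initial_lt|]. apply (u_up v _ _) with (2 := uf_compl _ _ Cx).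
    intros y Hy. apply not_le_lt; auto.
Qed.

Lemma tequiv_below u v : tequiv lt u v <-> below u v /\ below v u.
Proof. unfold tequiv; rewrite !tle_below; tauto. Qed.

Lemma below_tmin u u' v v' : below u u' -> below v v' -> below (tmin lt u v) (tmin lt u' v').
Proof.
  intros A B I HI H. apply tmin_initial in H; auto. apply tmin_initial; auto.
  destruct H; [left; apply A|right; apply B]; auto.
Qed.

Lemma below_tmax u u' v v' : below u u' -> below v v' -> below (tmax lt u v) (tmax lt u' v').
Proof.
  intros A B I HI H. apply tmax_initial in H; auto. apply tmax_initial; auto.
  destruct H; split; [apply A|apply B]; auto.
Qed.

Lemma separation u v I : initial_seg lt I -> umem u I -> ~ umem v I ->
  tmin lt u v = u /\ tmin lt v u = u /\ tmax lt u v = v /\ tmax lt v u = v.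
Proof.
  intros HI Hu Hv. pose proof (uf_compl _ _ Hv) as Nv.
  assert (K : forall x y, I x -> ~ I y -> lt x y) by (intros; eapply initial_seg_lt; eauto).
  unfold tmin, tmax; repeat split.
  - apply (ext_op_left _ u v I (fun _ y => ~ I y)); auto. intros; apply xmin_l; left; auto.
  - apply (ext_op_right _ v u (fun y => ~ I y) (fun _ => I)); auto. intros; apply xmin_r; auto.
  - apply (ext_op_right _ u v I (fun _ y => ~ I y)); auto. intros; apply xmax_r; left; auto.
  - apply (ext_op_left _ v u (fun y => ~ I y) (fun _ => I)); auto. intros; apply xmax_l; auto.
Qed.

Lemma not_below_commute u v : ~ below u v -> tmin lt u v = tmin lt v u /\ tmax lt u v = tmax lt v u.
Proof.
  intro N. destruct (not_below _ _ N) as [I [HI [A B]]].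
  destruct (separation v u I HI A B) as [a [b [c d]]]. rewrite a, b, c, d; auto.
Qed.

Lemma principal_class u v x : below u v -> below v u -> u = principal_uf x -> v = u.
Proof.
  intros L1 L2 E. subst u.
  apply (uf_principal_of_gap v (fun y => le lt y x) (fun y => lt y x)).
  - apply L2; [apply initial_le|apply le_refl].
  - intro B. apply L1 in B; [|apply initial_lt]. exact (lt_irrefl x B).
  - intros y [a|a] b; [contradiction|auto].
Qed.

Lemma principal_idem x :
  tmin lt (principal_uf x) (principal_uf x) = principal_uf x /\
  tmax lt (principal_uf x) (principal_uf x) = principal_uf x.
Proof.
  split; [apply (ext_op_left _ _ _ (fun y => y = x) (fun _ y => y = x))
         |apply (ext_op_left _ _ _ (fun y => y = x) (fun _ y => y = x))];
    try reflexivity; intros; subst; [apply xmin_l|apply xmax_r]; apply le_refl.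
Qed.

(* For non-principal u, no ray (-oo, x] with x in I_u belongs to u, and no
   ray [x, +oo) with x in J_u does: u concentrates "at the end" of its cut. *)
Lemma Iu_open u x : ~ is_principal u -> Iu lt u x -> ~ umem u (fun y => le lt y x).
Proof.
  intros NP Hx H. apply NP. exists x.
  apply (uf_principal_of_gap u _ (fun y => lt y x) x H).
  - intro B. exact (lt_irrefl x (Hx _ (initial_lt x) B)).
  - intros y [a|a] b; [contradiction|auto].
Qed.

Lemma Ju_open u x : ~ is_principal u -> Ju lt u x -> ~ umem u (fun y => le lt x y).
Proof.
  intros NP Hx H. apply NP. exists x.
  apply (uf_principal_of_gap u _ (fun y => lt x y) x H).
  - intro B. exact (lt_irrefl x (Hx _ (final_lt x) B)).
  - intros y [a|a] b; [contradiction|auto].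
Qed.

Lemma Iu_or_Ju u : umem u (Iu lt u) \/ umem u (Ju lt u).
Proof.
  destruct (classic (umem u (Iu lt u))) as [H|H]; [left; auto|right].
  apply NNPP; intro N2.
  destruct (uf_meet u _ _ (uf_compl _ _ H) (uf_compl _ _ N2)) as [x [Nx Mx]].
  unfold Iu in Nx; unfold Ju in Mx.
  apply not_all_ex_not in Nx; destruct Nx as [I NI].
  apply imply_to_and in NI; destruct NI as [HI NI].
  apply imply_to_and in NI; destruct NI as [uI NIx].
  apply not_all_ex_not in Mx; destruct Mx as [J NJ].
  apply imply_to_and in NJ; destruct NJ as [HJ NJ].
  apply imply_to_and in NJ; destruct NJ as [uJ NJx].
  destruct (uf_meet u _ _ uI uJ) as [y [Iy Jy]].
  destruct (classic (le lt x y)) as [a|a].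
  - apply NIx. eapply HI; eauto.
  - apply NJx. eapply HJ; eauto. left. apply not_le_lt; auto.
Qed.

Lemma equiv_final u v J : below u v -> below v u -> final_seg lt J -> (umem u J <-> umem v J).
Proof.
  intros L1 L2 HJ. rewrite (uf_compl_iff u J), (uf_compl_iff v J).
  pose proof (final_compl_initial J HJ) as HC.
  split; intros N H; apply N; [apply L1|apply L2]; auto.
Qed.

Lemma class_left_zero u v w : ~ is_principal u -> umem u (Iu lt u) ->
  below v u -> below u v -> below w u -> below u w ->
  tmin lt v w = v /\ tmax lt v w = w.
Proof.
  intros NP HI L1 L2 L3 L4.
  assert (Av : umem v (Iu lt u)) by (apply L1; auto; apply Iu_initial).
  assert (B : forall x, Iu lt u x -> umem w (fun y => lt x y)).
  { intros x Hx.
    assert (N : ~ umem w (fun y => le lt y x)).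
    { intro H; apply (Iu_open u x NP Hx); apply L4; auto; apply initial_le. }
    apply (u_up w _ _) with (2 := uf_compl _ _ N). intros y Hy; apply not_le_lt; auto. }
  unfold tmin, tmax; split.
  - apply (ext_op_left _ v w _ _ Av B). intros; apply xmin_l; left; auto.
  - apply (ext_op_right _ v w _ _ Av B). intros; apply xmax_r; left; auto.
Qed.

Lemma class_right_zero u v w : ~ is_principal u -> umem u (Ju lt u) ->
  below v u -> below u v -> below w u -> below u w ->
  tmin lt v w = w /\ tmax lt v w = v.
Proof.
  intros NP HJ L1 L2 L3 L4.
  assert (Av : umem v (Ju lt u)) by (apply (equiv_final u v); auto; apply Ju_final).
  assert (B : forall x, Ju lt u x -> umem w (fun y => lt y x)).
  { intros x Hx. apply L3; [apply initial_lt|].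
    apply (u_up u _ _) with (2 := uf_compl _ _ (Ju_open u x NP Hx)).
    intros y Hy; apply not_le_lt; auto. }
  unfold tmin, tmax; split.
  - apply (ext_op_right _ v w _ _ Av B). intros; apply xmin_r; auto.
  - apply (ext_op_left _ v w _ _ Av B). intros; apply xmax_l; auto.
Qed.

Lemma equiv_band u v : below u v -> below v u ->
  (tmin lt u v = u /\ tmin lt v u = v /\ tmax lt u v = v /\ tmax lt v u = u) \/
  (tmin lt u v = v /\ tmin lt v u = u /\ tmax lt u v = u /\ tmax lt v u = v).
Proof.
  intros L1 L2. pose proof (below_refl u) as R.
  destruct (classic (is_principal u)) as [[x Hx]|NP].
  - rewrite (principal_class u v x L1 L2 Hx), Hx. left.
    destruct (principal_idem x); tauto.
  - destruct (Iu_or_Ju u) as [H|H]; [left|right].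
    + destruct (class_left_zero u u v NP H R R L2 L1) as [a b].
      destruct (class_left_zero u v u NP H L2 L1 R R) as [c d]. tauto.
    + destruct (class_right_zero u u v NP H R R L2 L1) as [a b].
      destruct (class_right_zero u v u NP H L2 L1 R R) as [c d]. tauto.
Qed.

Lemma tmin_idem u : tmin lt u u = u.
Proof. destruct (equiv_band u u (below_refl u) (below_refl u)); tauto. Qed.

Lemma tle_tmin u v : tle lt u v <-> (tmin lt u v = u \/ tmin lt v u = u).
Proof.
  rewrite tle_below. split.
  - intro L. destruct (classic (below v u)) as [L2|N].
    + destruct (equiv_band u v L L2); tauto.
    + destruct (not_below _ _ N) as [I [HI [A B]]]. left; apply (separation u v I); auto.
  - intros [H|H] I HI Hv; rewrite <- H; apply tmin_initial; auto.
Qed.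

Lemma tle_tmax u v : tle lt u v <-> (tmax lt u v = v \/ tmax lt v u = v).
Proof.
  rewrite tle_below. split.
  - intro L. destruct (classic (below v u)) as [L2|N].
    + destruct (equiv_band u v L L2); tauto.
    + destruct (not_below _ _ N) as [I [HI [A B]]]. left; apply (separation u v I); auto.
  - intros [H|H] I HI Hv; rewrite <- H in Hv; apply tmax_initial in Hv; tauto.
Qed.

Lemma tle_tmin_neq u v : tle lt u v <-> (tmin lt u v = u \/ tmin lt u v <> tmin lt v u).
Proof.
  split.
  - intro T. apply tle_tmin in T. destruct (classic (tmin lt u v = u)); [left; auto|right].
    destruct T as [T|T]; [contradiction|]. rewrite T; auto.
  - intros [H|H]; [apply tle_tmin; auto|].
    rewrite tle_below. apply NNPP; intro N. apply H, not_below_commute; auto.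
Qed.

Lemma tle_tmax_neq u v : tle lt u v <-> (tmax lt u v = v \/ tmax lt u v <> tmax lt v u).
Proof.
  split.
  - intro T. apply tle_tmax in T. destruct (classic (tmax lt u v = v)); [left; auto|right].
    destruct T as [T|T]; [contradiction|]. rewrite T; auto.
  - intros [H|H]; [apply tle_tmax; auto|].
    rewrite tle_below. apply NNPP; intro N. apply H, not_below_commute; auto.
Qed.

Lemma tequiv_tmin u v : tequiv lt u v <-> (tmin lt u v <> tmin lt v u \/ u = v).
Proof.
  rewrite tequiv_below. split.
  - intros [L1 L2]. destruct (classic (u = v)) as [E|NE]; [right; auto|left].
    destruct (equiv_band u v L1 L2) as [[a [b _]]|[a [b _]]]; rewrite a, b; auto.
  - intros [H|H]; [|subst; split; apply below_refl].
    split; apply NNPP; intro N; apply H; destruct (not_below_commute _ _ N); auto.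
Qed.

Lemma tequiv_tmax u v : tequiv lt u v <-> (tmax lt u v <> tmax lt v u \/ u = v).
Proof.
  rewrite tequiv_below. split.
  - intros [L1 L2]. destruct (classic (u = v)) as [E|NE]; [right; auto|left].
    destruct (equiv_band u v L1 L2) as [[_ [_ [a b]]]|[_ [_ [a b]]]]; rewrite a, b; auto.
  - intros [H|H]; [|subst; split; apply below_refl].
    split; apply NNPP; intro N; apply H; destruct (not_below_commute _ _ N); auto.
Qed.

Lemma tequiv_relD u v : tequiv lt u v <-> relD lt u v.
Proof.
  rewrite tequiv_below. unfold relD. split.
  - intros [L1 L2].
    destruct (equiv_band u v L1 L2) as [[a [b _]]|[a [b _]]];
      rewrite ?a, ?b, ?tmin_idem; auto.
  - intros [H1 H2]. split; intros I HI H.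
    + rewrite <- H1. apply tmin_initial; auto. left. apply tmin_initial; auto.
    + rewrite <- H2. apply tmin_initial; auto. left. apply tmin_initial; auto.
Qed.

Lemma supp_cases u :
  (exists x, u = principal_uf x /\ supp lt u = SPt x) \/
  (~ is_principal u /\ umem u (Iu lt u) /\ supp lt u = SLeft (Iu lt u)) \/
  (~ is_principal u /\ umem u (Ju lt u) /\ supp lt u = SRight (Ju lt u)).
Proof.
  unfold supp. destruct (excluded_middle_informative (is_principal u)) as [H|H].
  - left. destruct (constructive_indefinite_description _ H) as [x Hx]; simpl. exists x; auto.
  - destruct (excluded_middle_informative (umem u (Iu lt u))); [right; left; auto|].
    right; right. destruct (Iu_or_Ju u); tauto.
Qed.

(* The initial segments an ultrafilter with support s must contain. *)
Definition trace (s : supp_t X) (I : X -> Prop) : Prop :=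
  match s with
  | SPt x => I x
  | SLeft K => forall x, K x -> I x
  | SRight L => exists x, I x /\ L x
  end.

Definition admissible (s : supp_t X) : Prop :=
  match s with
  | SPt _ => True
  | SLeft K => initial_seg lt K /\ forall x, K x -> exists y, K y /\ lt x y
  | SRight L => final_seg lt L /\ forall x, L x -> exists y, L y /\ lt y x
  end.

Lemma supp_trace u I : initial_seg lt I -> (umem u I <-> trace (supp lt u) I).
Proof.
  intro HI. destruct (supp_cases u) as [[x [E Hs]]|[[NP [Hi Hs]]|[NP [Hj Hs]]]];
    rewrite Hs; simpl.
  - subst u; simpl; tauto.
  - split; [intros H x Hx; apply Hx; auto|intro H; apply (u_up u _ _ H Hi)].
  - split.
    + intro H. destruct (uf_meet u _ _ H Hj) as [x Hx]; exists x; auto.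
    + intros [x [Ix Jx]]. apply NNPP; intro N.
      apply (Jx (fun y => ~ I y)); auto. apply initial_compl_final; auto. apply uf_compl; auto.
Qed.

Lemma supp_admissible u : admissible (supp lt u).
Proof.
  destruct (supp_cases u) as [[x [E Hs]]|[[NP [Hi Hs]]|[NP [Hj Hs]]]];
    rewrite Hs; simpl; auto.
  - split; [apply Iu_initial|]. intros x Hx.
    destruct (uf_meet u _ _ Hi (uf_compl _ _ (Iu_open u x NP Hx))) as [y [Iy Ny]].
    exists y; split; auto. apply not_le_lt; auto.
  - split; [apply Ju_final|]. intros x Hx.
    destruct (uf_meet u _ _ Hj (uf_compl _ _ (Ju_open u x NP Hx))) as [y [Jy Ny]].
    exists y; split; auto. apply not_le_lt; auto.
Qed.

Definition separates (s t : supp_t X) : Prop :=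
  exists I, initial_seg lt I /\ trace s I /\ ~ trace t I.

Lemma supp_lt_point x t : admissible t -> (supp_lt lt (SPt x) t <-> separates (SPt x) t).
Proof.
  pose proof initial_le as IL. unfold separates.
  destruct t as [y|K|L]; simpl; intro Gt; split.
  - intro H. exists (fun z => le lt z x). repeat split; auto using le_refl.
    intro H2. eapply le_not_lt; eauto.
  - intros [I [HI [Ix Ny]]]. eapply initial_seg_lt; eauto.
  - intro H. destruct Gt as [GK GM]. destruct (GM x H) as [y [Ky Hy]].
    exists (fun z => le lt z x). repeat split; auto using le_refl.
    intro H2. apply (le_not_lt y x); auto.
  - intros [I [HI [Ix N]]]. destruct Gt as [GK _].
    apply not_all_ex_not in N; destruct N as [z N]; apply imply_to_and in N; destruct N as [Kz Nz].
    apply (GK x z Kz). left. eapply initial_seg_lt; eauto.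
  - intro H. destruct Gt as [GL _]. exists (fun z => le lt z x). repeat split; auto using le_refl.
    intros [z [Hz Lz]]. apply H. eapply GL; eauto.
  - intros [I [HI [Ix N]]] Lx. apply N; exists x; auto.
Qed.

Lemma supp_lt_left K t : admissible (SLeft K) -> admissible t ->
  (supp_lt lt (SLeft K) t <-> separates (SLeft K) t).
Proof.
  pose proof initial_le as IL. unfold separates.
  destruct t as [y|K'|L]; simpl; intros [GK GM] Gt; split.
  - intro H. exists K. repeat split; auto.
  - intros [I [HI [H N]]] Ky. apply N; auto.
  - intros [Hsub [z [K'z Nz]]]. exists K. repeat split; auto.
  - intros [I [HI [H N]]]. destruct Gt as [GK' _].
    apply not_all_ex_not in N; destruct N as [y N]; apply imply_to_and in N; destruct N as [K'y Ny].
    split; [|exists y; split; auto].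
    intros z Kz. apply (GK' z y K'y). left. eapply initial_seg_lt; eauto.
  - intro H. exists K. repeat split; auto. intros [z [Kz Lz]]; eapply H; eauto.
  - intros [I [HI [H N]]] z [Kz Lz]. apply N; exists z; auto.
Qed.

Lemma supp_lt_right L t : admissible (SRight L) -> admissible t ->
  (supp_lt lt (SRight L) t <-> separates (SRight L) t).
Proof.
  pose proof initial_le as IL. unfold separates.
  destruct t as [y|K|L']; simpl; intros [GL GM] Gt; split.
  - intro H. destruct (GM y H) as [z [Lz Hz]].
    exists (fun w => le lt w z). split; auto. split; [exists z; split; auto using le_refl|].
    intro H2. apply (le_not_lt y z); auto.
  - intros [I [HI [[z [Iz Lz]] N]]]. apply (GL y z Lz). left. eapply initial_seg_lt; eauto.
  - intros [z [Kz Lz]]. destruct Gt as [GK GMK]. destruct (GMK z Kz) as [y [Ky Hy]].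
    exists (fun w => le lt w z). split; auto. split; [exists z; split; auto using le_refl|].
    intro H2. apply (le_not_lt y z); auto.
  - intros [I [HI [[z [Iz Lz]] N]]]. destruct Gt as [GK _].
    apply not_all_ex_not in N; destruct N as [w N]; apply imply_to_and in N; destruct N as [Kw Nw].
    exists z; split; auto. apply (GK z w Kw). left. eapply initial_seg_lt; eauto.
  - intros [Hsub [x [Lx Nx]]]. exists (fun w => le lt w x). split; auto.
    split; [exists x; split; auto using le_refl|].
    intros [z [Hz L'z]]. apply Nx. destruct Gt as [GL' _]. eapply GL'; eauto.
  - intros [I [HI [[z [Iz Lz]] N]]]. split.
    + intros w L'w. apply (GL w z Lz). left.
      apply (initial_seg_lt I); [exact HI|exact Iz|intro Iw; apply N; exists w; auto].
    + exists z; split; auto. intro L'z; apply N; exists z; auto.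
Qed.

Lemma supp_lt_iff u v : supp_lt lt (supp lt u) (supp lt v) <->
  exists I, initial_seg lt I /\ umem u I /\ ~ umem v I.
Proof.
  assert (E : supp_lt lt (supp lt u) (supp lt v) <-> separates (supp lt u) (supp lt v)).
  { pose proof (supp_admissible u) as Gu. pose proof (supp_admissible v) as Gv.
    destruct (supp lt u) as [x|K|L].
    - apply supp_lt_point; auto.
    - apply supp_lt_left; auto.
    - apply supp_lt_right; auto. }
  rewrite E. unfold separates.
  split; intros [I [HI [A B]]]; exists I; split; auto; rewrite !(supp_trace _ I HI) in *; auto.
Qed.

Lemma supp_eq_below u v : supp lt u = supp lt v -> below u v /\ below v u.
Proof.
  intro E; split; intros I HI H; apply (supp_trace _ I HI); apply (supp_trace _ I HI) in H;
    [rewrite E|rewrite <- E]; exact H.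
Qed.

Lemma below_supp_eq u v : below u v -> below v u -> supp lt u = supp lt v.
Proof.
  intros L1 L2.
  destruct (supp_cases u) as [[x [E Hs]]|Hu].
  - rewrite (principal_class u v x L1 L2 E); auto.
  - assert (NPv : ~ is_principal v).
    { intros [y Hy]. rewrite (principal_class v u y L2 L1 Hy) in Hu.
      destruct Hu as [[NP _]|[NP _]]; apply NP; exists y; auto. }
    assert (EI : Iu lt u = Iu lt v).
    { apply functional_extensionality; intro x; apply propositional_extensionality.
      unfold Iu; split; intros H I HI Hv; apply H; auto. }
    assert (EJ : Ju lt u = Ju lt v).
    { apply functional_extensionality; intro x; apply propositional_extensionality.
      unfold Ju; split; intros H J HJ Hv; apply H; auto;
        [rewrite (equiv_final u v J)|rewrite <- (equiv_final u v J)]; auto. }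
    assert (EM : umem u (Iu lt u) <-> umem v (Iu lt u)).
    { split; [apply L2|apply L1]; apply Iu_initial. }
    unfold supp. rewrite <- EI, <- EJ.
    destruct (excluded_middle_informative (is_principal u)) as [P|_];
      [destruct Hu as [[NP _]|[NP _]]; contradiction|].
    destruct (excluded_middle_informative (is_principal v)) as [P|_]; [contradiction|].
    destruct (excluded_middle_informative (umem u (Iu lt u)));
      destruct (excluded_middle_informative (umem v (Iu lt u))); tauto.
Qed.

Lemma supp_tmin u v : supp lt (tmin lt u v) = smin lt (supp lt u) (supp lt v).
Proof.
  unfold smin. destruct (excluded_middle_informative _) as [H|H].
  - apply supp_lt_iff in H. destruct H as [I [HI [A B]]].
    destruct (separation u v I HI A B) as [a _]. rewrite a; auto.
  - assert (L : below v u).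
    { intros I HI Hu. apply NNPP; intro N. apply H, supp_lt_iff. exists I; auto. }
    apply below_supp_eq.
    + intros I HI Hv. apply tmin_initial; auto.
    + intros I HI Hm. apply tmin_initial in Hm; auto. destruct Hm; auto.
Qed.

Lemma supp_tmax u v : supp lt (tmax lt u v) = smax lt (supp lt u) (supp lt v).
Proof.
  unfold smax. destruct (excluded_middle_informative _) as [H|H].
  - apply supp_lt_iff in H. destruct H as [I [HI [A B]]].
    destruct (separation u v I HI A B) as [_ [_ [a _]]]. rewrite a; auto.
  - assert (L : below v u).
    { intros I HI Hu. apply NNPP; intro N. apply H, supp_lt_iff. exists I; auto. }
    apply below_supp_eq.
    + intros I HI Hu. apply tmax_initial; auto.
    + intros I HI Hm. apply tmax_initial in Hm; tauto.
Qed.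

End LinearOrder.

Theorem corollary6 (X : Type) (lt : X -> X -> Prop) (Hlin : strict_linear_order X lt) :
  (* (1) *)
  (forall u v : ultra X,
     (tle lt u v <-> (tmin lt u v = u \/ tmin lt v u = u)) /\
     (tle lt u v <-> (tmin lt u v = u \/ tmin lt u v <> tmin lt v u)) /\
     (tle lt u v <-> (tmax lt u v = v \/ tmax lt v u = v)) /\
     (tle lt u v <-> (tmax lt u v = v \/ tmax lt u v <> tmax lt v u)) /\
     (tequiv lt u v <-> (tmin lt u v <> tmin lt v u \/ u = v)) /\
     (tequiv lt u v <-> (tmax lt u v <> tmax lt v u \/ u = v)))
  /\
  (* (2) ≡ is a congruence of (βX, max~, min~) and coincides with D *)
  ((forall u : ultra X, tequiv lt u u) /\
   (forall u v : ultra X, tequiv lt u v -> tequiv lt v u) /\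
   (forall u v w : ultra X, tequiv lt u v -> tequiv lt v w -> tequiv lt u w) /\
   (forall u u' v v' : ultra X, tequiv lt u u' -> tequiv lt v v' ->
      tequiv lt (tmin lt u v) (tmin lt u' v') /\
      tequiv lt (tmax lt u v) (tmax lt u' v')) /\
   (forall u v : ultra X, tequiv lt u v <-> relD lt u v))
  /\
  (* (3) [u] |-> supp u is an isomorphism βX/≡ -> (s(X), min, max) *)
  ((forall u v : ultra X, tequiv lt u v <-> supp lt u = supp lt v) /\
   (forall s : supp_t X, in_sX lt s -> exists u : ultra X, supp lt u = s) /\
   (forall u v : ultra X, supp lt (tmin lt u v) = smin lt (supp lt u) (supp lt v)) /\
   (forall u v : ultra X, supp lt (tmax lt u v) = smax lt (supp lt u) (supp lt v)))
  /\
  (* (4) the ≡-classes *)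
  (forall u : ultra X,
     (is_principal u -> forall v : ultra X, tequiv lt v u -> v = u) /\
     (~ is_principal u -> umem u (Iu lt u) ->
        forall v w : ultra X, tequiv lt v u -> tequiv lt w u ->
          tmin lt v w = v /\ tmax lt v w = w) /\
     (~ is_principal u -> umem u (Ju lt u) ->
        forall v w : ultra X, tequiv lt v u -> tequiv lt w u ->
          tmin lt v w = w /\ tmax lt v w = v)).
Proof.
  pose proof (tequiv_below Hlin) as TB.
  split; [|split; [|split]].
  - intros u v.
    exact (conj (tle_tmin Hlin u v) (conj (tle_tmin_neq Hlin u v) (conj (tle_tmax Hlin u v)
          (conj (tle_tmax_neq Hlin u v) (conj (tequiv_tmin Hlin u v) (tequiv_tmax Hlin u v)))))).
  - repeat apply conj. 
    + intro u; apply TB; split; apply below_refl.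
    + intros u v H; apply TB; apply TB in H; tauto.
    + intros u v w H1 H2; apply TB; apply TB in H1; apply TB in H2.
      destruct H1, H2; split; eapply below_trans; eauto.
    + intros u u' v v' H1 H2; apply TB in H1; apply TB in H2; destruct H1, H2.
      split; apply TB; split; auto using below_tmin, below_tmax.
    + apply (tequiv_relD Hlin).
  - repeat apply conj.
    + intros u v. rewrite TB. split; [intros []; apply (below_supp_eq Hlin); auto|apply (supp_eq_below Hlin)].
    + intros s H; exact H.
    + apply (supp_tmin Hlin).
    + apply (supp_tmax Hlin).
  - intro u. repeat apply conj.
    + intros [x Hx] v H. apply TB in H. destruct H. eapply principal_class; eauto.
    + intros NP HI v w H1 H2. apply TB in H1; apply TB in H2. destruct H1, H2.
      apply (class_left_zero Hlin u); auto.
    + intros NP HJ v w H1 H2. apply TB in H1; apply TB in H2. destruct H1, H2.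
      apply (class_right_zero Hlin u); auto.
Qed.
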